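(* Let $G$ be a connected (claw, bull)-free graph and let $C$ be an induced cycle of $G$ of length at least $4$. Then $N[C]=V(G)$, i.e. every vertex of $G$ lies on $C$ or is adjacent to a vertex of $C$.
   Context: A claw is a graph isomorphic to $K_{1,3}$; a bull is the graph obtained from a triangle by adding two pendant edges at two different vertices. A graph is (claw, bull)-free if it has no induced claw and no induced bull. $N[C]$ denotes $V(C)\cup N(V(C))$, where $N(X)=\big(\bigcup_{x\in X}N(x)\big)\setminus X$. *)

From mathcomp Require Import all_boot.
Set Implicit Arguments. Unset Strict Implicit. Unset Printing Implicit Defensive.

Definition simple_graph (T : finType) (adj : rel T) : Prop :=
  symmetric adj /\ irreflexive adj.

Definition connected_graph (T : finType) (adj : rel T) : Prop :=
  forall x y : T, connect adj x y.

Definition has_induced_claw (T : finType) (adj : rel T) : Prop :=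
  exists a b c d : T, uniq [:: a; b; c; d] /\
    adj a b /\ adj a c /\ adj a d /\
    ~~ adj b c /\ ~~ adj b d /\ ~~ adj c d.

Definition has_induced_bull (T : finType) (adj : rel T) : Prop :=
  exists x y z u v : T, uniq [:: x; y; z; u; v] /\
    adj x y /\ adj y z /\ adj x z /\ adj u x /\ adj v y /\
    ~~ adj u y /\ ~~ adj u z /\ ~~ adj u v /\ ~~ adj v x /\ ~~ adj v z.

Definition claw_bull_free (T : finType) (adj : rel T) : Prop :=
  ~ has_induced_claw adj /\ ~ has_induced_bull adj.

Definition induced_cycle (T : finType) (adj : rel T) (k : nat) (c : 'I_k -> T) : Prop :=
  injective c /\
  forall i j : 'I_k,
    adj (c i) (c j) = ((val j == (val i).+1 %% k) || (val i == (val j).+1 %% k)).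

Definition closed_nbhd (T : finType) (adj : rel T) (k : nat) (c : 'I_k -> T) : {set T} :=
  [set v | [exists i, (v == c i) || adj v (c i)]].

From mathcomp Require Import all_boot.

(* Suppose a vertex lies outside N[C]. Walking from it to C, one finds v outside
   N[C] adjacent to some u with u ~ c_i.  As C is induced of length at least 4,
   c_(i-1) c_i c_(i+1) is an induced path, and v is anticomplete to it.  Depending
   on the adjacency of u to c_(i-1) and c_(i+1), the vertices u, v and this path
   contain a claw centred at u, a bull, or a claw centred at c_i. *)

Set Implicit Arguments.
Unset Strict Implicit.
Unset Printing Implicit Defensive.

Lemma val_iter_ordS k (i : 'I_k) m : val (iter m (@ordS k) i) = (i + m) %% k.
Proof.
elim: m => [|m IHm] /=; first by rewrite addn0 modn_small.
by rewrite IHm addnS -addn1 modnDml addn1.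
Qed.

Lemma iter_ordS_id k (i : 'I_k) m : (iter m (@ordS k) i == i) = (k %| m).
Proof.
rewrite -val_eqE val_iter_ordS -[X in _ == X](modn_small (ltn_ord i)).
by rewrite -[X in _ == X %% k]addn0 eqn_modDl mod0n.
Qed.

Lemma connect_exit (T : finType) (e : rel T) (A : {pred T}) x y :
  connect e x y -> x \notin A -> y \in A ->
  exists v u, [/\ e v u, v \notin A & u \in A].
Proof.
case/connectP=> p + ->; elim: p x => [|z p IHp] x /= => [_ /negPf -> //|].
case/andP=> exz zp xA; case: (boolP (z \in A)) => [zA _ | zA]; first by exists x, z.
exact: IHp.
Qed.

Definition induced_P3 (T : finType) (adj : rel T) (a b c : T) :=
  [&& adj a b, adj b c, ~~ adj a c & a != c].

Section ClawBullFree.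

Variables (T : finType) (adj : rel T).
Hypotheses (adj_sym : symmetric adj) (adj_irr : irreflexive adj).

Lemma adj_neq x y : adj x y -> x != y.
Proof. by apply: contraTneq => ->; rewrite adj_irr. Qed.

Lemma adj_nadj_neq x y z : adj x z -> ~~ adj y z -> x != y.
Proof. by move=> xz; apply: contraNneq => <-. Qed.

Lemma induced_clawI a b c d :
  adj a b -> adj a c -> adj a d -> ~~ adj b c -> ~~ adj b d -> ~~ adj c d ->
  [&& b != c, b != d & c != d] -> has_induced_claw adj.
Proof.
move=> ab ac ad bc bd cd /and3P[nbc nbd ncd]; exists a, b, c, d.
by do !split=> //; rewrite /= !inE !negb_or nbc nbd ncd !adj_neq.
Qed.

Lemma induced_bullI x y z u v :
  adj x y -> adj y z -> adj x z -> adj u x -> adj v y ->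
  ~~ adj u y -> ~~ adj u z -> ~~ adj u v -> ~~ adj v x -> ~~ adj v z ->
  has_induced_bull adj.
Proof.
move=> xy yz xz ux vy uy uz uv vx vz; exists x, y, z, u, v.
have zy : adj z y by rewrite adj_sym.
have zx : adj z x by rewrite adj_sym.
do !split=> //; rewrite /= !inE !negb_or (adj_neq xy) (adj_neq xz).
rewrite [x == u]eq_sym (adj_neq ux) (adj_nadj_neq xz vz) (adj_neq yz).
rewrite (adj_nadj_neq yz uz) [y == v]eq_sym (adj_neq vy).
by rewrite (adj_nadj_neq zy uy) (adj_nadj_neq zx vx) (adj_nadj_neq ux vx).
Qed.

Lemma induced_P3_sym a b c : induced_P3 adj a b c = induced_P3 adj c b a.
Proof.
rewrite /induced_P3 (adj_sym c b) (adj_sym b a) (adj_sym c a) eq_sym.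
by case: (adj a b); case: (adj b c).
Qed.

Lemma induced_P3_dominates_second_nbr a b c u v :
  claw_bull_free adj -> induced_P3 adj a b c -> adj u b -> adj v u ->
  [|| adj v a, adj v b | adj v c].
Proof.
move=> [no_claw no_bull] + ub vu; apply: contraPT => /norP[va /norP[vb vc]].
wlog ca : a c va vc / adj u c ==> adj u a => [wlog_ca P3|].
  have [ca|] := boolP (adj u c ==> adj u a); first exact: wlog_ca ca P3.
  rewrite negb_imply => /andP[uc _].
  apply: (wlog_ca c a) => //; first by rewrite uc implybT.
  by rewrite induced_P3_sym.
case/and4P=> ab bc nac anc.
have uv : adj u v by rewrite adj_sym.
have [ba cb] : adj b a /\ adj c b by split; rewrite adj_sym.
have [av cv] : ~~ adj a v /\ ~~ adj c v by split; rewrite adj_sym.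
have bu : adj b u by rewrite adj_sym.
have [av_neq cv_neq] := (adj_nadj_neq ab vb, adj_nadj_neq cb vb).
have [au_neq cu_neq] : a != u /\ c != u.
  by split; rewrite eq_sym; apply: adj_nadj_neq uv _.
have [ua|nua] := boolP (adj u a); last first.
  have nuc : ~~ adj u c by apply: contra nua; apply/implyP.
  have [nau ncu] : ~~ adj a u /\ ~~ adj c u by split; rewrite adj_sym.
  by apply: no_claw; apply: (induced_clawI ba bc bu nac nau ncu); rewrite anc au_neq cu_neq.
have [uc|nuc] := boolP (adj u c).
  by apply: no_claw; apply: (induced_clawI ua uc uv nac av cv); rewrite anc av_neq cv_neq.
have [ncu nca] : ~~ adj c u /\ ~~ adj c a by split; rewrite adj_sym.
by apply: no_bull; apply: (induced_bullI bu ua ba cb vu ncu nca cv vb va).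
Qed.

End ClawBullFree.

Section InducedCycle.

Variables (T : finType) (adj : rel T) (k : nat) (c : 'I_k -> T).
Hypotheses (cycle_c : induced_cycle adj c) (k_ge4 : 4 <= k).

Lemma induced_cycle_adjE i j : adj (c i) (c j) = (j == ordS i) || (i == ordS j).
Proof. by case: cycle_c => _ ->; rewrite -!val_eqE. Qed.

Lemma induced_cycle_P3 i : induced_P3 adj (c (ord_pred i)) (c i) (c (ordS i)).
Proof.
have ordS_neq m : 0 < m < 4 -> (iter m (@ordS k) i == i) = false.
  by case/andP=> m_gt0 m_lt4; rewrite iter_ordS_id gtnNdvd // (leq_trans m_lt4).
have /= S1 := ordS_neq 1 isT; have /= S2 := ordS_neq 2 isT.
have /= S3 := ordS_neq 3 isT.
rewrite /induced_P3 !induced_cycle_adjE ord_predK !eqxx S1 (inj_eq cycle_c.1).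
rewrite -[ord_pred i == ordS (ordS i)](inj_eq (@ordS_inj k)).
rewrite -[ord_pred i == ordS i](inj_eq (@ordS_inj k)) ord_predK.
by rewrite ![i == _]eq_sym S2 S3.
Qed.

End InducedCycle.

Theorem lemma3 (T : finType) (adj : rel T) (k : nat) (c : 'I_k -> T) :
  simple_graph adj -> connected_graph adj -> claw_bull_free adj ->
  4 <= k -> induced_cycle adj c ->
  closed_nbhd adj c = [set: T].
Proof.
move=> [adj_sym adj_irr] connected cbf k_ge4 cycle_c.
apply/setP => w; rewrite in_setT; apply: contraT => w_out.
have k_gt0 : 0 < k by apply: leq_trans k_ge4.
pose i0 := Ordinal k_gt0.
have c0_in : c i0 \in closed_nbhd adj c.
  by rewrite inE; apply/existsP; exists i0; rewrite eqxx.
have [v [u [vu v_out u_in]]] := connect_exit (connected w (c i0)) w_out c0_in.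
have v_far j : ~~ adj v (c j).
  by move: v_out; rewrite inE negb_exists => /forallP/(_ j); rewrite negb_or => /andP[].
move: u_in; rewrite inE => /existsP[i] /orP[/eqP u_ci | ui].
  by move: (v_far i); rewrite -u_ci vu.
have P3 := induced_cycle_P3 cycle_c k_ge4 i.
have := induced_P3_dominates_second_nbr adj_sym adj_irr cbf P3 ui vu.
by rewrite !(negPf (v_far _)).
Qed.
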